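(* Assume $V=W$, that $\mathcal{A}$ is coercive, i.e. there is $\alpha>0$ with $\alpha\|\phi\|_W^2\le \mathcal{A}(\phi,\phi)$ for all $\phi\in W$, and that $W_\theta\cup S_\theta\subseteq V_\eta$. Let $(w^n_\theta)_{n\ge1}\subset W_\theta$ be a minimizing sequence, i.e. $\lim_{n\to\infty}\|u-w^n_\theta\|_{op,\eta}=\sigma^*:=\inf_{w_\theta\in W_\theta}\|u-w_\theta\|_{op,\eta}$. Then $(w^n_\theta)$ has a subsequence converging weakly in $W$ to some $u^*_\theta\in \mathrm{cl}^{seq}_w(W_\theta)$, and every such weak limit satisfies $$\|u-u^*_\theta\|_{op,\eta}\le \inf_{w_\theta\in W_\theta}\|u-w_\theta\|_{op,\eta}.$$
   Context: $W$ and $V$ are reflexive separable real Banach spaces. $\mathcal{A}:W\times V\to\mathbb{R}$ is a bilinear form with $\mathcal{A}(w,v)\le M\|w\|_W\|v\|_V$ for all $w\in W,v\in V$, and $\mathcal{F}:V\to\mathbb{R}$ is a bounded linear functional. It is assumed that there is a unique $u\in W$ with $\mathcal{A}(u,v)=\mathcal{F}(v)$ for all $v\in V$. $W_\theta\subseteq W$ and $V_\eta\subseteq V$ are arbitrary subsets (''function classes'', e.g. neural network classes), with $V_\eta$ containing an element of nonzero norm. For $w\in W$, $\|w\|_{op,\eta}:=\sup_{v_\eta\in V_\eta,\ \|v_\eta\|_V\neq0}\mathcal{A}(w,v_\eta)/\|v_\eta\|_V$. $S_\theta:=\{w_1-w_2:\ w_1,w_2\in W_\theta\}$. $\mathrm{cl}^{seq}_w(W_\theta)\subseteq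 W$ denotes the weak sequential closure of $W_\theta$ in $W$, i.e. the set of all weak limits in $W$ of sequences of elements of $W_\theta$. *)

From HB Require Import structures.
From mathcomp Require Import all_boot all_order all_algebra.
From mathcomp Require Import all_classical all_reals all_analysis.
Set Implicit Arguments. Unset Strict Implicit. Unset Printing Implicit Defensive.
Import Order.TTheory GRing.Theory Num.Theory.
Import numFieldNormedType.Exports.
Local Open Scope classical_set_scope.
Local Open Scope ring_scope.

Section Defs.
Variables (R : realType) (W : normedModType R).

Definition lin_fun (f : W -> R) : Prop :=
  forall (a : R) (x y : W), f (a *: x + y) = a * f x + f y.

Definition bdd_fun (f : W -> R) : Prop :=
  exists M : R, forall x : W, `|f x| <= M * `|x|.

Definition dual_elem (f : W -> R) : Prop := lin_fun f /\ bdd_fun f.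

(* W is reflexive: every bounded linear functional Phi on W* (bounded w.r.t.
   the dual norm, expressed via admissible bounds M of f) is the evaluation
   at some element of W. *)
Definition reflexive_space : Prop :=
  forall Phi : (W -> R) -> R,
    (forall (a : R) (f g : W -> R), dual_elem f -> dual_elem g ->
        Phi (fun x => a * f x + g x) = a * Phi f + Phi g) ->
    (exists C : R, forall (f : W -> R) (M : R), dual_elem f -> 0 <= M ->
        (forall x, `|f x| <= M * `|x|) -> `|Phi f| <= C * M) ->
    exists w : W, forall f, dual_elem f -> Phi f = f w.

Definition separable_space : Prop :=
  exists s : nat -> W, forall (x : W) (e : R), 0 < e ->
    exists n, `|x - s n| < e.

Definition weak_cvg (x : nat -> W) (l : W) : Prop :=
  forall f : W -> R, dual_elem f -> (fun n => f (x n)) @ \oo --> f l.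

Definition weak_seq_closure (S : set W) : set W :=
  [set l | exists x : nat -> W, (forall n, S (x n)) /\ weak_cvg x l].

Definition bilinear_form (A : W -> W -> R) : Prop :=
  (forall (a : R) (x y v : W), A (a *: x + y) v = a * A x v + A y v) /\
  (forall (a : R) (w x y : W), A w (a *: x + y) = a * A w x + A w y).

Definition opnorm (A : W -> W -> R) (Veta : set W) (w : W) : R :=
  sup [set A w v / `|v| | v in [set v | Veta v /\ `|v| != 0]].

Definition diff_set (S : set W) : set W :=
  [set w | exists w1 w2, S w1 /\ S w2 /\ w = w1 - w2].

End Defs.

From HB Require Import structures.
From mathcomp Require Import all_boot all_order all_algebra.
From mathcomp Require Import all_classical all_reals all_analysis.
From mathcomp Require Import unstable.
Set Implicit Arguments. Unset Strict Implicit. Unset Printing Implicit Defensive.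
Import Order.TTheory GRing.Theory Num.Theory.
Import numFieldNormedType.Exports.
Local Open Scope classical_set_scope.
Local Open Scope ring_scope.

(* Write sigma(w) for the operator norm of u - w.  Coercivity together with the inclusion
   of the differences of W_theta in V_eta gives
   alpha |w - w'|^2 <= (sigma(w) + sigma(w')) |w - w'|, so a minimizing sequence is eventually
   bounded.  In a reflexive space a bounded sequence converges weakly along every
   ultrafilter: f |-> lim f(y_n) is represented by an element of W.  For a dense sequence
   (s_k), coercivity makes the functionals A(., s_k) separate points; a diagonal argument
   makes all of them converge along one subsequence, which forces all its ultrafilter
   limits to coincide, so that subsequence converges weakly.  Finally the bound
   A(u - w, v) / |v| <= sigma(w) passes to weak limits for each fixed v in V_eta. *)

Section BilinearForm.
Variables (R : realType) (W : normedModType R) (A : W -> W -> R).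
Hypothesis bilA : bilinear_form A.

Lemma bilinear_formBl x y v : A (x - y) v = A x v - A y v.
Proof. by have := bilA.1 1 (x - y) y v; rewrite scale1r mul1r subrK => ->; rewrite addrK. Qed.

Lemma bilinear_formBr w x y : A w (x - y) = A w x - A w y.
Proof. by have := bilA.2 1 w (x - y) y; rewrite scale1r mul1r subrK => ->; rewrite addrK. Qed.

Lemma bilinear_formNl x v : A (- x) v = - A x v.
Proof. by rewrite -sub0r bilinear_formBl -[in A 0 v](subrr x) bilinear_formBl subrr sub0r. Qed.

Lemma bilinear_formNr w x : A w (- x) = - A w x.
Proof. by rewrite -sub0r bilinear_formBr -[in A w 0](subrr x) bilinear_formBr subrr sub0r. Qed.

Variable M : R.
Hypothesis boundA : forall w v, A w v <= M * `|w| * `|v|.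

Lemma bilinear_form_norm_le w v : `|A w v| <= `|M| * `|w| * `|v|.
Proof.
rewrite ler_norml; apply/andP; split.
  rewrite lerNl -bilinear_formNl; apply: le_trans (boundA _ _) _.
  by rewrite normrN ler_wpM2r // ler_wpM2r // ler_norm.
by apply: le_trans (boundA _ _) _; rewrite ler_wpM2r // ler_wpM2r // ler_norm.
Qed.

Lemma dual_elem_bilinear_form v : dual_elem (A ^~ v).
Proof.
split; first by move=> a x y; exact: bilA.1.
exists (`|M| * `|v|) => x /=; rewrite mulrAC; exact: bilinear_form_norm_le.
Qed.

Variable Veta : set W.

Lemma opnorm_ub w v : Veta v -> `|v| != 0 -> A w v <= opnorm A Veta w * `|v|.
Proof.
move=> Vv v_neq0; have v_gt0 : 0 < `|v| by rewrite lt_neqAle eq_sym v_neq0 normr_ge0.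
rewrite -ler_pdivrMr //; apply: sup_upper_bound; last by exists v.
split; first by exists (A w v / `|v|), v.
exists (`|M| * `|w|) => _ [x [_ x_neq0] <-].
have x_gt0 : 0 < `|x| by rewrite lt_neqAle eq_sym x_neq0 normr_ge0.
rewrite ler_pdivrMr //; apply: le_trans (ler_norm _) _.
exact: bilinear_form_norm_le.
Qed.

Hypothesis Veta_nonzero : exists v, Veta v /\ `|v| != 0.

Lemma opnorm_le w r :
  (forall v, Veta v -> `|v| != 0 -> A w v / `|v| <= r) -> opnorm A Veta w <= r.
Proof.
move=> le_r; have [v0 V0] := Veta_nonzero; rewrite /opnorm; apply: ge_sup.
  by exists (A w v0 / `|v0|), v0.
by move=> _ [v [Vv v_neq0] <-]; exact: le_r.
Qed.

Lemma opnorm_weak_limit_le (u l : W) (y : nat -> W) (L : \bar R) :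
  weak_cvg y l -> (fun n => (opnorm A Veta (u - y n))%:E) @ \oo --> L ->
  ((opnorm A Veta (u - l))%:E <= L)%E.
Proof.
move=> yl opnorm_L.
have ratio_le v : Veta v -> `|v| != 0 -> ((A (u - l) v / `|v|)%:E <= L)%E.
  move=> Vv v_neq0; have v_gt0 : 0 < `|v| by rewrite lt_neqAle eq_sym v_neq0 normr_ge0.
  apply: (lee_cvg_to (f := fun n => (A (u - y n) v / `|v|)%:E) _ opnorm_L); last first.
    by apply: nearW => n; rewrite lee_fin ler_pdivrMr //; exact: opnorm_ub.
  apply: cvg_EFin; first exact: nearW.
  rewrite /comp /= bilinear_formBl; under eq_fun do rewrite bilinear_formBl.
  apply: cvgM; last exact: cvg_cst.
  by apply: cvgB; [exact: cvg_cst | exact: yl _ (dual_elem_bilinear_form v)].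
case: L opnorm_L ratio_le => [r | | ] _ ratio_le.
- by rewrite lee_fin; apply: opnorm_le => // v Vv v_neq0; rewrite -lee_fin; exact: ratio_le.
- exact: leey.
- by have [v [Vv v_neq0]] := Veta_nonzero; have := ratio_le v Vv v_neq0; rewrite leeNy_eq.
Qed.

End BilinearForm.

Section CoerciveForm.
Variables (R : realType) (W : normedModType R) (A : W -> W -> R) (M alpha : R).
Hypotheses (bilA : bilinear_form A) (boundA : forall w v, A w v <= M * `|w| * `|v|).
Hypotheses (alpha_gt0 : 0 < alpha) (coerciveA : forall x, alpha * `|x| ^+ 2 <= A x x).

Lemma coercive_opnorm_sub (Veta : set W) (u w1 w2 : W) :
  Veta (w1 - w2) -> Veta (w2 - w1) ->
  alpha * `|w1 - w2| ^+ 2 <= (opnorm A Veta (u - w1) + opnorm A Veta (u - w2)) * `|w1 - w2|.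
Proof.
move=> V12 V21; apply: le_trans (coerciveA _) _.
have [d0|d_neq0] := eqVneq `|w1 - w2| 0.
  move/eqP: d0; rewrite normr_eq0 => /eqP->; rewrite normr0 mulr0.
  by have := bilinear_formBl bilA 0 0 0; rewrite subrr => ->; rewrite subrr.
have -> : A (w1 - w2) (w1 - w2) = A (u - w1) (w2 - w1) + A (u - w2) (w1 - w2).
  have e : w1 - w2 = (u - w2) - (u - w1) by rewrite [RHS]addrC opprB addrA subrK.
  by rewrite {1}e bilinear_formBl // -bilinear_formNr // opprB addrC.
have n21 : `|w2 - w1| = `|w1 - w2| by rewrite -normrN opprB.
rewrite mulrDl -{1}n21; apply: lerD; apply: (opnorm_ub bilA boundA) => //.
by rewrite n21.
Qed.

Lemma coercive_dense_separating (s : nat -> W) :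
  (forall x e, 0 < e -> exists k, `|x - s k| < e) ->
  forall z z', (forall k, A z (s k) = A z' (s k)) -> z = z'.
Proof.
move=> dense_s z z' eq_zz'; apply/eqP; rewrite -subr_eq0 -normr_eq0.
set e := z - z'.
suff : alpha * `|e| ^+ 2 <= 0.
  by rewrite pmulr_rle0 // -[_ ^+ 2]ger0_norm ?exprn_ge0 // normr_le0 expf_eq0 => /andP[].
apply/ler_addgt0Pr => eps eps_gt0; rewrite add0r.
set K := `|M| * `|e| + 1; have K_gt0 : 0 < K by rewrite ltr_wpDl.
have [k ek] := dense_s e (eps / K) (divr_gt0 eps_gt0 K_gt0).
have Aes : A e (s k) = 0 by rewrite bilinear_formBl // eq_zz' subrr.
apply: le_trans (coerciveA e) _.
rewrite -[A e e]subr0 -Aes -bilinear_formBr //; apply: le_trans (ler_norm _) _.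
apply: le_trans (bilinear_form_norm_le bilA boundA _ _) _.
rewrite -(mulfVK (lt0r_neq0 K_gt0) eps) [_ * K]mulrC.
by apply: ler_pM => //; [rewrite lerDl | exact: ltW].
Qed.

Lemma coercive_seq_bounded (Veta : set W) (u : W) (y : nat -> W) (c : R) :
  (forall m n, Veta (y m - y n)) -> (forall n, opnorm A Veta (u - y n) <= c) ->
  forall n, `|y n| <= `|y 0%N| + `|c + c| / alpha.
Proof.
move=> Vy yc n; have : `|y n| <= `|y 0%N| + `|y n - y 0%N|.
  by rewrite -{1}(subrK (y 0%N) (y n)) addrC ler_normD.
move/le_trans; apply; rewrite lerD2l.
have [d0|d_neq0] := eqVneq `|y n - y 0%N| 0; first by rewrite d0 divr_ge0 // ltW.
have d_gt0 : 0 < `|y n - y 0%N| by rewrite lt_neqAle eq_sym d_neq0 normr_ge0.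
rewrite ler_pdivlMr // mulrC -(ler_pM2r d_gt0) -mulrA -expr2.
apply: le_trans (coercive_opnorm_sub _ (Vy n 0%N) (Vy 0%N n)) _.
by rewrite ler_wpM2r //; apply: le_trans (ler_norm _); exact: lerD.
Qed.

End CoerciveForm.

Lemma cvg_ultra_finer (I : Type) (F : set_system I) (T : topologicalType)
    (h : I -> T) (l : T) : Filter F ->
  (forall G, UltraFilter G -> F `<=` G -> h @ G --> l) -> h @ F --> l.
Proof.
move=> FF hG N Nl; apply: contrapT => notFN.
pose P := [set i | ~ N (h i)].
have PF : ProperFilter (within P F).
  apply: Build_ProperFilter_ex => S FS; apply: contrapT => S0; apply: notFN.
  have FPS : F (fun i => P i -> S i) := FS.
  suff : F (h @^-1` N) by [].
  apply: filterS FPS => i PS /=.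
  by apply: contrapT => /PS Si; apply: S0; exists i.
have [G [UG sG]] := ultraFilterLemma PF.
have FG : F `<=` G by move=> S FS; apply: sG; apply: filterS FS => i Si _.
have GN : G (h @^-1` N) by exact: hG G UG FG N Nl.
have GP : G P by apply: sG; exact: withinT.
by have [i [Ni Pi]] := filter_ex (filterI GN GP).
Qed.

Lemma ultra_cvg_bounded (R : realType) (G : set_system nat) (y : nat -> R) (B : R) :
  UltraFilter G -> (forall n, `|y n| <= B) -> exists l, y @ G --> l /\ `|l| <= B.
Proof.
move=> UG yB.
have GB : G (y @^-1` [set` `[- B, B]]).
  by apply: filterS (@filterT _ G _) => n _ /=; rewrite in_itv /= -ler_norml.
have [l [Bl cl_l]] := @segment_compact R (- B) B (y @ G) _ GB.
exists l; split; last by move: Bl; rewrite /= in_itv /= -ler_norml.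
move=> N Nl /=; have [//|GNc] := in_ultra_setVsetC (y @^-1` N) UG.
by have [x [/= ? ?]] := cl_l (~` N) N GNc Nl.
Qed.

Section WeakCompactness.
Variables (R : realType) (W : normedModType R).
Hypothesis reflW : reflexive_space W.

Lemma ultra_weak_limit (G : set_system nat) (y : nat -> W) (B : R) :
  UltraFilter G -> (forall n, `|y n| <= B) ->
  exists z, forall f, dual_elem f -> (f \o y) @ G --> f z.
Proof.
move=> UG yB.
have bounded_lim (f : W -> R) (Mf : R) : 0 <= Mf -> (forall x, `|f x| <= Mf * `|x|) ->
    exists l, (f \o y) @ G --> l /\ `|l| <= Mf * B.
  move=> Mf_ge0 fMf; apply: ultra_cvg_bounded => n.
  by apply: le_trans (fMf _) _; rewrite ler_wpM2l.
have dual_lim (f : W -> R) : dual_elem f -> (f \o y) @ G --> lim ((f \o y) @ G).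
  move=> [_ [Mf fMf]]; have [|l [fl _]] := bounded_lim f `|Mf| (normr_ge0 _).
    by move=> x; apply: le_trans (fMf x) _; rewrite ler_wpM2r // ler_norm.
  by rewrite (cvg_lim _ fl).
have [z zP] : exists z, forall f, dual_elem f -> lim ((f \o y) @ G) = f z.
  apply: reflW.
    move=> a f g df dg; apply: cvg_lim => //.
    by apply: cvgD; [apply: cvgM; [exact: cvg_cst | exact: dual_lim] | exact: dual_lim].
  exists B => f Mf df Mf_ge0 fMf; have [l [fl lB]] := bounded_lim f Mf Mf_ge0 fMf.
  by rewrite (cvg_lim _ fl) // mulrC.
by exists z => f df; rewrite -zP //; exact: dual_lim.
Qed.

Lemma weak_cvg_of_separating (y : nat -> W) (B : R) (g : nat -> W -> R) :
  (forall n, `|y n| <= B) -> (forall k, dual_elem (g k)) ->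
  (forall z z', (forall k, g k z = g k z') -> z = z') ->
  (forall k, cvgn (g k \o y)) -> exists z, weak_cvg y z.
Proof.
move=> yB dual_g sep_g cvg_g.
(* Along an ultrafilter finer than the cofinite one, the weak limit is determined by
   the limits of the g k \o y, so it does not depend on the ultrafilter. *)
have limit_unique G z : UltraFilter G -> \oo `<=` G ->
    (forall f, dual_elem f -> (f \o y) @ G --> f z) ->
    forall k, g k z = lim ((g k \o y) @ \oo).
  move=> UG finer zG k.
  have gk_lim : (g k \o y) @ G --> lim ((g k \o y) @ \oo).
    by move=> S /(cvg_g k) S_oo; exact: finer.
  exact: cvg_unique _ (zG _ (dual_g k)) gk_lim.
have [G [UG finer]] := ultraFilterLemma (F := \oo) _.
have [z zG] := ultra_weak_limit UG yB.
exists z => f df; apply: cvg_ultra_finer => G' UG' finer'.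
have [z' zG'] := ultra_weak_limit UG' yB.
suff -> : z = z' by exact: zG'.
by apply: sep_g => k; rewrite (limit_unique G) // (limit_unique G').
Qed.

End WeakCompactness.

Lemma cvgn_later_values (T : topologicalType) (u v : nat -> T) (l : T) :
  u @ \oo --> l -> (\forall n \near \oo, exists2 j, (n <= j)%N & v n = u j) ->
  v @ \oo --> l.
Proof.
move=> ul [N _ vu] S /ul [N' _ uS]; exists (maxn N N') => // n /=.
rewrite geq_max => /andP[Nn N'n]; have [j nj ->] := vu n Nn.
by apply: uS; exact: leq_trans nj.
Qed.

Lemma bounded_fun_le (R : realType) (u : nat -> R) (b : R) :
  (forall n, `|u n| <= b) -> bounded_fun u.
Proof.
move=> ub; rewrite /bounded_near; near=> M => n _ /=.
apply: le_trans (ub n) _.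
by near: M; apply: nbhs_pinfty_ge; rewrite num_real.
Unshelve. all: by end_near.
Qed.

Lemma bounded_fun_comp (R : realType) (u : nat -> R) (f : nat -> nat) :
  bounded_fun u -> bounded_fun (u \o f).
Proof. by move=> [M [M_real uM]]; exists M; split => // x /uM ux n _; exact: ux. Qed.

Section DiagonalExtraction.
Variables (R : realType) (sub : (nat -> R) -> nat -> nat).
Hypothesis subP :
  forall u, bounded_fun u -> {mono sub u : m n / (m <= n)%N} /\ cvgn (u \o sub u).
Variable c : nat -> nat -> R.
Hypothesis c_bounded : forall k, bounded_fun (c k).

Fixpoint extraction k : nat -> nat :=
  if k is k'.+1 then extraction k' \o sub (c k \o extraction k') else sub (c 0%N).

Let sub_atP k : {mono sub (c k.+1 \o extraction k) : m n / (m <= n)%N} /\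
  cvgn (c k.+1 \o extraction k \o sub (c k.+1 \o extraction k)).
Proof. exact/subP/bounded_fun_comp. Qed.

Lemma extraction_mono k : {mono extraction k : m n / (m <= n)%N}.
Proof.
elim: k => [|k IHk]; first exact: (subP (c_bounded 0%N)).1.
by move=> m n /=; rewrite IHk (sub_atP k).1.
Qed.

Lemma extraction_cvg k : cvgn (c k \o extraction k).
Proof. by case: k => [|k]; [exact: (subP (c_bounded 0%N)).2 | exact: (sub_atP k).2]. Qed.

Lemma extraction_later k j n :
  exists2 i, (n <= i)%N & extraction (k + j) n = extraction k i.
Proof.
elim: j n => [|j IHj] n; first by exists n; rewrite ?addn0.
rewrite addnS /=; have [i ni ->] := IHj (sub (c (k + j).+1 \o extraction (k + j)) n).
by exists i => //; apply: leq_trans ni; exact: mono_leq_infl (sub_atP _).1 n.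
Qed.

Definition diagonal n := extraction n n.

Lemma diagonal_mono : {mono diagonal : m n / (m <= n)%N}.
Proof.
apply: leq_mono; apply: homo_ltn; first exact: ltn_trans.
move=> n; rewrite /diagonal /= (leqW_mono (extraction_mono n)).
exact: mono_leq_infl (sub_atP n).1 n.+1.
Qed.

Lemma diagonal_cvg k : cvgn (c k \o diagonal).
Proof.
have /cvg_ex [l kl] := extraction_cvg (k := k).
apply/cvg_ex; exists l; apply: cvgn_later_values kl _; near=> n.
have [i ni eq_i] := extraction_later k (n - k) n.
exists i => //=; rewrite /diagonal -eq_i subnKC //.
by near: n; exact: nbhs_infty_ge.
Unshelve. all: by end_near.
Qed.

End DiagonalExtraction.

Lemma diagonal_extraction (R : realType) (c : nat -> nat -> R) :
  (forall k, bounded_fun (c k)) ->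
  exists d, {mono d : m n / (m <= n)%N} /\ forall k, cvgn (c k \o d).
Proof.
have bw (u : nat -> R) : exists f : nat -> nat,
    bounded_fun u -> {mono f : m n / (m <= n)%N} /\ cvgn (u \o f).
  have [/bolzano_weierstrass [f f_mono f_cvg]|] := pselect (bounded_fun u); last by exists id.
  by exists f.
have [sub subP] := choice bw.
by move=> c_bounded; exists (diagonal sub c); split; [exact: diagonal_mono | exact: diagonal_cvg].
Qed.

Lemma bounded_weak_cvg_subseq (R : realType) (W : normedModType R)
    (g : nat -> W -> R) (y : nat -> W) (B : R) :
  reflexive_space W -> (forall k, dual_elem (g k)) ->
  (forall z z', (forall k, g k z = g k z') -> z = z') ->
  (forall n, `|y n| <= B) ->
  exists phi z, {mono phi : m n / (m <= n)%N} /\ weak_cvg (y \o phi) z.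
Proof.
move=> reflW dual_g sep_g yB.
have [|phi [phi_mono phi_cvg]] := diagonal_extraction (c := fun k n => g k (y n)).
  move=> k; have [_ [Mk gMk]] := dual_g k; apply: (bounded_fun_le (b := `|Mk| * B)) => n.
  apply: le_trans (gMk _) _; apply: le_trans (ler_wpM2r (normr_ge0 _) (ler_norm Mk)) _.
  exact: ler_wpM2l.
have [z yz] := weak_cvg_of_separating reflW (y := y \o phi) (fun n => yB _) dual_g sep_g phi_cvg.
by exists phi, z.
Qed.

Theorem lemma1 (R : realType) (W : completeNormedModType R)
  (A : W -> W -> R) (F : W -> R) (M : R) (u : W)
  (Wtheta Veta : set W) (wn : nat -> W) :
  reflexive_space W -> separable_space W ->
  bilinear_form A ->
  (forall w v : W, A w v <= M * `|w| * `|v|) ->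
  dual_elem F ->
  (forall v, A u v = F v) ->
  (forall w : W, (forall v, A w v = F v) -> w = u) ->
  (exists v0, Veta v0 /\ `|v0| != 0) ->
  (exists alpha : R, 0 < alpha /\ forall phi : W, alpha * `|phi| ^+ 2 <= A phi phi) ->
  Wtheta `|` diff_set Wtheta `<=` Veta ->
  (forall n, Wtheta (wn n)) ->
  (fun n => (opnorm A Veta (u - wn n))%:E) @ \oo -->
      ereal_inf [set (opnorm A Veta (u - w))%:E | w in Wtheta] ->
  (exists (phi : nat -> nat) (ustar : W),
      (forall m n, (m < n)%N -> (phi m < phi n)%N) /\
      weak_cvg (wn \o phi) ustar /\ weak_seq_closure Wtheta ustar) /\
  (forall (phi : nat -> nat) (ustar : W),
      (forall m n, (m < n)%N -> (phi m < phi n)%N) ->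
      weak_cvg (wn \o phi) ustar ->
      ((opnorm A Veta (u - ustar))%:E <=
         ereal_inf [set (opnorm A Veta (u - w))%:E | w in Wtheta])%E).
Proof.
move=> reflW [s dense_s] bilA boundA _ _ _ Veta_nonzero [alpha [alpha_gt0 coerciveA]].
move=> Wtheta_Veta Wtheta_wn; set L := ereal_inf _ => opnorm_L.
pose sigma n := opnorm A Veta (u - wn n).
split.
  have [N _ sigma_lt] : \forall n \near \oo, sigma n < sigma 0%N + 1.
    have L_lt : (L < (sigma 0%N + 1)%:E)%E.
      apply: (@le_lt_trans _ _ (sigma 0%N)%:E); last by rewrite lte_fin ltrDl.
      by apply: ereal_inf_lbound; exists (wn 0%N).
    have eventually_lt := opnorm_L _ (open_ereal_lt' L_lt).
    by near=> n; rewrite -lte_fin; near: n.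
  have wn_diff m n : Veta (wn m - wn n) by apply: Wtheta_Veta; right; exists (wn m), (wn n).
  have := coercive_seq_bounded bilA boundA alpha_gt0 coerciveA (y := fun n => wn (n + N)%N)
    (fun m n => wn_diff _ _) (fun n => ltW (sigma_lt _ (leq_addl n N))).
  move/(bounded_weak_cvg_subseq reflW (fun k => dual_elem_bilinear_form bilA boundA (s k))
    (coercive_dense_separating bilA boundA alpha_gt0 coerciveA dense_s)) => [phi [z [phi_mono yz]]].
  exists (fun n => phi n + N)%N, z; split; first by move=> m n; rewrite ltn_add2r leqW_mono.
  by split => //; exists (fun n => wn (phi n + N)%N).
move=> phi ustar phi_incr wn_ustar.
apply: (opnorm_weak_limit_le bilA boundA Veta_nonzero wn_ustar).
apply: cvgn_later_values opnorm_L _; apply: nearW => n; exists (phi n) => //.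
exact: mono_leq_infl (leq_mono phi_incr) n.
Unshelve. all: by end_near.
Qed.
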